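(* Let $d$ be a fixed nonzero complex constant, let $\{a_i\},\{b_i\},\{c_i\},\{d_i\}$ ($i\in\mathbb{Z}$) be complex sequences, and let $m,n\ge0$ be integers such that for $-n\le j\le m$ the quantities $(c_j-a_j)(1-\frac{a_jc_j}{d})$, $(d_j-a_j)(1-\frac{a_jd_j}{d})$, $(c_j-b_j)(1-\frac{b_jc_j}{d})$, $(d_j-b_j)(1-\frac{b_jd_j}{d})$ are nonzero. Then $$\sum_{k=-n}^{m}(b_k-a_k)\Big(1-\frac{a_kb_k}{d}\Big)(d_k-c_k)\Big(1-\frac{c_kd_k}{d}\Big)\frac{\prod_{j=1}^{k-1}(c_j-a_j)(1-\frac{a_jc_j}{d})}{\prod_{j=1}^{k}(d_j-a_j)(1-\frac{a_jd_j}{d})}\frac{\prod_{j=1}^{k-1}(d_j-b_j)(1-\frac{b_jd_j}{d})}{\prod_{j=1}^{k}(c_j-b_j)(1-\frac{b_jc_j}{d})}$$ $$=\frac{\prod_{j=1}^{m}(c_j-a_j)(1-\frac{a_jc_j}{d})}{\prod_{j=1}^{m}(d_j-a_j)(1-\frac{a_jd_j}{d})}\frac{\prod_{j=1}^{m}(d_j-b_j)(1-\frac{b_jd_j}{d})}{\prod_{j=1}^{m}(c_j-b_j)(1-\frac{b_jc_j}{d})}-\frac{\prod_{j=-n}^{0}(d_j-a_j)(1-\frac{a_jd_j}{d})}{\prod_{j=-n}^{0}(c_j-a_j)(1-\frac{a_jc_j}{d})}\frac{\prod_{j=-n}^{0}(c_j-b_j)(1-\frac{b_jc_j}{d})}{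\prod_{j=-n}^{0}(d_j-b_j)(1-\frac{b_jd_j}{d})}.$$
   Context: Products over integer ranges follow the convention: $\prod_{j=k}^{m}A_j=A_k\cdots A_m$ if $m\ge k$; $=1$ if $m=k-1$; $=(A_{m+1}\cdots A_{k-1})^{-1}$ if $m\le k-2$. The constant $d$ is a distinct object from the sequence $d_k$. *)

From mathcomp Require Import all_boot all_algebra.
From mathcomp Require Import reals.
From mathcomp.real_closed Require Import complex.
Set Implicit Arguments. Unset Strict Implicit. Unset Printing Implicit Defensive.
Import GRing.Theory Num.Theory.
Local Open Scope ring_scope.

(* Product over an integer range with the paper's convention:
   prod_{j=k}^{m} A_j = A_k ... A_m            if m >= k,
                      = 1                      if m = k-1,
                      = (A_{m+1} ... A_{k-1})^-1 if m <= k-2. *)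
Definition zprod {F : fieldType} (A : int -> F) (k m : int) : F :=
  if (k <= m + 1)%R then \prod_(i < absz (m + 1 - k)%R) A (k + i%:Z)
  else (\prod_(i < absz (k - 1 - m)%R) A (m + 1 + i%:Z))^-1.

Definition zsum {F : fieldType} (A : int -> F) (lo hi : int) : F :=
  \sum_(i < absz (hi + 1 - lo)%R) A (lo + i%:Z).

Definition fct {F : fieldType} (d : F) (x y : int -> F) (j : int) : F :=
  (y j - x j) * (1 - x j * y j / d).

(* The factor f(x, y) = (y - x)(1 - x y / d) satisfies the three-term identity
   f(a,b) f(c,e) = f(a,c) f(b,e) - f(a,e) f(b,c).  Writing T_k for the product of
   the two ratios of partial products up to k, this identity says exactly that
   the k-th summand is T_k - T_(k-1), so the sum telescopes to T_m - T_(-n-1).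
   By the product convention, prod_(j=1)^(-n-1) = (prod_(j=-n)^0)^-1, which turns
   T_(-n-1) into the subtracted term. *)

From mathcomp Require Import all_boot all_order all_algebra.
From mathcomp Require Import reals.
From mathcomp.real_closed Require Import complex.
From mathcomp Require Import ring zify.
Import Order.TTheory GRing.Theory Num.Theory.
Local Open Scope ring_scope.

Section IntegerRanges.
Context {F : fieldType}.
Implicit Types (A B T : int -> F) (l k lo hi : int).

Lemma zprod_nat A l (N : nat) : zprod A l (l + N%:Z - 1) = \prod_(i < N) A (l + i%:Z).
Proof.
rewrite /zprod subrK (_ : l + N%:Z - l = N%:Z); last by ring.
by rewrite lerDl.
Qed.

Lemma zprodV A l k : zprod A l k = (zprod A (k + 1) (l - 1))^-1.
Proof.
rewrite /zprod subrK (_ : k + 1 - 1 - (l - 1) = k + 1 - l); last by ring.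
rewrite (_ : l - 1 - k = - (k + 1 - l)); last by ring.
rewrite (_ : l - (k + 1) = - (k + 1 - l)); last by ring.
have [_|_|<-] := ltgtP l (k + 1) => /=; rewrite ?invrK //.
by rewrite subrr big_ord0 invr1.
Qed.

Lemma zprodSr A l k : A k != 0 -> zprod A l k = zprod A l (k - 1) * A k.
Proof.
move=> Ak_neq0; have [le_lk|lt_kl] := lerP l k.
  have [N ->] : exists N : nat, k = l + N%:Z by exists `|k - l|%N; lia.
  rewrite {1}(_ : l + N%:Z = l + N.+1%:Z - 1); last by lia.
  by rewrite !zprod_nat big_ord_recr; congr (_ * A _).
rewrite (zprodV A l k) (zprodV A l (k - 1)) subrK.
have [N ->] : exists N : nat, l - 1 = k + N%:Z by exists `|(l - 1 - k)%R|%N; lia.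
rewrite [X in zprod A k X](_ : _ = k + N.+1%:Z - 1); last by lia.
rewrite [X in zprod A (k + 1) X](_ : _ = k + 1 + N%:Z - 1); last by lia.
rewrite !zprod_nat big_ord_recl invfM addr0 mulrAC mulVf // mul1r.
by congr (_^-1); apply: eq_bigr => i _; rewrite lift0 -addn1 PoszD addrAC addrA.
Qed.

(* [zsum A lo hi] has |hi + 1 - lo| terms, so it is not empty when hi < lo - 1. *)
Lemma eq_zsum A B lo hi : lo <= hi + 1 ->
  (forall k, lo <= k <= hi -> A k = B k) -> zsum A lo hi = zsum B lo hi.
Proof.
move=> le_lohi eqAB; apply: eq_bigr => i _; apply: eqAB.
have := ltn_ord i; lia.
Qed.

Lemma zsum_telescope T lo hi : lo <= hi + 1 ->
  zsum (fun k => T k - T (k - 1)) lo hi = T hi - T (lo - 1).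
Proof.
move=> le_lohi.
have [N ->] : exists N : nat, hi = lo + N%:Z - 1 by exists `|(hi + 1 - lo)%R|%N; lia.
rewrite /zsum (_ : `|(lo + N%:Z - 1 + 1 - lo)%R|%N = N); last by lia.
elim: N => [|N IH]; first by rewrite big_ord0 addr0 subrr.
rewrite big_ord_recr /= IH (_ : lo + N.+1%:Z - 1 = lo + N%:Z); last by lia.
by rewrite addrC -addrA addKr.
Qed.

End IntegerRanges.

Lemma fct_three_term (F : fieldType) (d : F) (a b c e : int -> F) (j : int) : d != 0 ->
  fct d a b j * fct d c e j = fct d a c j * fct d b e j - fct d a e j * fct d b c j.
Proof. by move=> d_neq0; rewrite /fct; field. Qed.

Lemma ratio_step_diff (F : fieldType) (p q r s x y z w : F) : y != 0 -> w != 0 ->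
  (x * z - y * w) * (p / (q * y)) * (r / (s * w))
  = p * x / (q * y) * (r * z / (s * w)) - p / q * (r / s).
Proof.
(* q and s may vanish, so their inverses are kept as opaque atoms. *)
move=> y_neq0 w_neq0; rewrite !invfM; move: q^-1 s^-1 => qV sV.
by field; rewrite y_neq0 w_neq0.
Qed.

Theorem corollary3p7 (R : realType) (d : R[i]) (a b c e : int -> R[i])
    (m n : nat) (hd : d != 0)
    (hne : forall j : int, (- (n%:Z) <= j)%R -> (j <= m%:Z)%R ->
       [/\ fct d a c j != 0, fct d a e j != 0, fct d b c j != 0 & fct d b e j != 0]) :
  zsum (fun k : int =>
          fct d a b k * fct d c e k
          * (zprod (fct d a c) 1 (k - 1) / zprod (fct d a e) 1 k)
          * (zprod (fct d b e) 1 (k - 1) / zprod (fct d b c) 1 k))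
       (- (n%:Z)) (m%:Z)
  = (zprod (fct d a c) 1 (m%:Z) / zprod (fct d a e) 1 (m%:Z))
      * (zprod (fct d b e) 1 (m%:Z) / zprod (fct d b c) 1 (m%:Z))
    - (zprod (fct d a e) (- (n%:Z)) 0 / zprod (fct d a c) (- (n%:Z)) 0)
      * (zprod (fct d b c) (- (n%:Z)) 0 / zprod (fct d b e) (- (n%:Z)) 0).
Proof.
pose T k := (zprod (fct d a c) 1 k / zprod (fct d a e) 1 k)
          * (zprod (fct d b e) 1 k / zprod (fct d b c) 1 k).
have le_range : - (n%:Z) <= m%:Z + 1 by lia.
rewrite (eq_zsum _ (fun k => T k - T (k - 1))) ?zsum_telescope //; last first.
  move=> k /andP[le_nk le_km]; have [ac_neq0 ae_neq0 bc_neq0 be_neq0] := hne k le_nk le_km.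
  rewrite /T (zprodSr _ 1 _ ac_neq0) (zprodSr _ 1 _ ae_neq0).
  rewrite (zprodSr _ 1 _ bc_neq0) (zprodSr _ 1 _ be_neq0).
  by rewrite fct_three_term // ratio_step_diff.
by rewrite /T !(zprodV _ 1) subrK subrr !invrK ![_^-1 * _]mulrC.
Qed.
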